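(* Let $\bowtie\in\{\preceq,\succeq\}$, $\mathcal{T}\in\{\mathrm{dwp},\mathrm{awp}\}$, $C\in\mathsf{pGCL}$ and $f\in\mathbb{E}$. Then $\mathrm{trans}^{\bowtie}_{\mathcal{T}}[\![C]\!](f)\multimap C$.
   Context: States: fix a countably infinite set of program variables with values in $\mathbb{Q}_{\ge 0}$; a state is a map $\sigma$ from variables to $\mathbb{Q}_{\ge0}$ which is $0$ for all but finitely many variables; $\mathsf{States}$ is the set of states. A predicate is a map $\varphi:\mathsf{States}\to\{\mathsf{true},\mathsf{false}\}$; $\varphi\models\psi$ means every state satisfying $\varphi$ satisfies $\psi$; $\models\varphi$ means $\varphi$ holds in every state; $\varphi\Rightarrow\psi$ is the usual implication of predicates. Expectations: $\mathbb{E}$ is the set of maps $\mathsf{States}\to[0,\infty]$, ordered pointwise; $+,\cdot$ pointwise with $0\cdot\infty=0$; $\sqcap,\sqcup$ pointwise min/max; $[\varphi]$ Iverson bracket; $(\varphi\to g)(\sigma)=g(\sigma)$ if $\sigma\models\varphi$, else $\infty$; $f[x/E](\sigma)=f(\sigma[x\mapsto E(\sigma)])$. Programs of $\mathsf{pGCL}$: $C ::= \mathtt{skip} \mid x:=E \mid C;C \mid \mathtt{if}\ \varphi_1\to C\ \square\ \varphi_2\to C \mid \{C\}[p]\{C\} \mid \mathtt{while}(\varphi)\{C\}[I]$, where $E:\mathsf{States}\to\mathbb{Q}_{\ge0}$, $p:\mathsf{States}\to[0,1]$, in every guarded choice $\varphi_1\vee\varphi_2$ is valid, and every loop carries an invariant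 annotation $I\in\mathbb{E}$. Weakest preexpectations for $\mathcal{T}\in\{\mathrm{dwp},\mathrm{awp}\}$: $\mathcal{T}[\![\mathtt{skip}]\!](f)=f$; $\mathcal{T}[\![x:=E]\!](f)=f[x/E]$; $\mathcal{T}[\![C_1;C_2]\!](f)=\mathcal{T}[\![C_1]\!](\mathcal{T}[\![C_2]\!](f))$; $\mathrm{dwp}$ of a guarded choice is $(\varphi_1\to\mathrm{dwp}[\![C_1]\!](f))\sqcap(\varphi_2\to\mathrm{dwp}[\![C_2]\!](f))$; $\mathrm{awp}$ of a guarded choice is $[\varphi_1]\cdot\mathrm{awp}[\![C_1]\!](f)\sqcup[\varphi_2]\cdot\mathrm{awp}[\![C_2]\!](f)$; $\mathcal{T}[\![\{C_1\}[p]\{C_2\}]\!](f)=p\cdot\mathcal{T}[\![C_1]\!](f)+(1-p)\cdot\mathcal{T}[\![C_2]\!](f)$; for loops the least fixpoint of $g\mapsto[\neg\varphi]\cdot f+[\varphi]\cdot\mathcal{T}[\![C']\!](g)$. The auxiliary transformer $\mathcal{T}^*$ ($\mathrm{dwp}^*$, $\mathrm{awp}^*$) is defined by the same rules except that $\mathcal{T}^*[\![\mathtt{while}(\varphi)\{C'\}[I]]\!](f)=I$. Implementation relation $\multimap$: the smallest partial order on $\mathsf{pGCL}$ closed under: if $C_1'\multimap C_1$, $C_2'\multimap C_2$ then $C_1';C_2'\multimap C_1;C_2$ and $\{C_1'\}[p]\{C_2'\}\multimap\{C_1\}[p]\{C_2\}$; if moreover $\varphi_1'\models\varphi_1$, $\varphi_2'\models\varphi_2$,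 $\models\varphi_1'\vee\varphi_2'$ then $\mathtt{if}\ \varphi_1'\to C_1'\ \square\ \varphi_2'\to C_2'\multimap\mathtt{if}\ \varphi_1\to C_1\ \square\ \varphi_2\to C_2$; if $C'\multimap C$ then $\mathtt{while}(\varphi)\{C'\}\multimap\mathtt{while}(\varphi)\{C\}$. Comparison predicates: for $f,g\in\mathbb{E}$, $f\preceq g$ is the predicate true at $\sigma$ iff $f(\sigma)\le g(\sigma)$, and $f\succeq g$ is true at $\sigma$ iff $f(\sigma)\ge g(\sigma)$. Program transformer $\mathrm{trans}^{\bowtie}_{\mathcal{T}}:\mathsf{pGCL}\times\mathbb{E}\to\mathsf{pGCL}$, by induction: $\mathtt{skip}\mapsto\mathtt{skip}$; $x:=E\mapsto x:=E$; $C_1;C_2\mapsto \mathrm{trans}^{\bowtie}_{\mathcal{T}}[\![C_1]\!](\mathcal{T}^*[\![C_2]\!](f));\mathrm{trans}^{\bowtie}_{\mathcal{T}}[\![C_2]\!](f)$; $\mathtt{if}\ \varphi_1\to C_1\ \square\ \varphi_2\to C_2\mapsto \mathtt{if}\ \psi_1\to\mathrm{trans}^{\bowtie}_{\mathcal{T}}[\![C_1]\!](f)\ \square\ \psi_2\to\mathrm{trans}^{\bowtie}_{\mathcal{T}}[\![C_2]\!](f)$ with $\psi_1=\varphi_1\wedge(\varphi_2\Rightarrow \mathcal{T}^*[\![C_1]\!](f)\bowtie\mathcal{T}^*[\![C_2]\!](f))$ and $\psi_2=\varphi_2\wedge(\varphi_1\Rightarrow \mathcal{T}^*[\![C_2]\!](f)\bowtie\mathcal{T}^*[\![C_1]\!](f))$;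 $\{C_1\}[p]\{C_2\}\mapsto\{\mathrm{trans}^{\bowtie}_{\mathcal{T}}[\![C_1]\!](f)\}[p]\{\mathrm{trans}^{\bowtie}_{\mathcal{T}}[\![C_2]\!](f)\}$; $\mathtt{while}(\varphi)\{C'\}[I]\mapsto\mathtt{while}(\varphi)\{\mathrm{trans}^{\bowtie}_{\mathcal{T}}[\![C']\!](I)\}[I]$. *)

From Stdlib Require Import Reals Lra Lia QArith Qcanon Classical ClassicalDescription.
Open Scope R_scope.

Definition Var := nat.
Definition Val := { q : Qc | (0 <= q)%Qc }.

Record State := mkState {
  sval : Var -> Val;
  sfin : exists n : nat, forall x : Var, (n <= x)%nat -> proj1_sig (sval x) = 0%Qc
}.

Lemma upd_fin (s : State) (x : Var) (v : Val) :
  exists n : nat, forall y : Var, (n <= y)%nat ->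
    proj1_sig (if Nat.eqb y x then v else sval s y) = 0%Qc.
Proof.
  destruct (sfin s) as [n Hn]. exists (Nat.max n (S x)). intros y Hy.
  destruct (Nat.eqb y x) eqn:E.
  - apply Nat.eqb_eq in E. lia.
  - apply Hn. lia.
Qed.

Definition upd (s : State) (x : Var) (v : Val) : State :=
  mkState (fun y => if Nat.eqb y x then v else sval s y) (upd_fin s x v).

Definition Pred := State -> Prop.
Definition entails (p q : Pred) : Prop := forall s, p s -> q s.
Definition valid (p : Pred) : Prop := forall s, p s.

Inductive ENN : Type :=
| Fin : { r : R | 0 <= r } -> ENN
| Inf : ENN.

Definition ENN_le (a b : ENN) : Prop :=
  match a, b with
  | _, Inf => True
  | Inf, Fin _ => False
  | Fin r, Fin t => proj1_sig r <= proj1_sig t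
  end.

Definition fin0 : ENN := Fin (exist _ 0 (Rle_refl 0)).

Lemma plus_nonneg (r t : { r : R | 0 <= r }) : 0 <= proj1_sig r + proj1_sig t.
Proof. destruct r, t; simpl; lra. Qed.
Lemma mult_nonneg (r t : { r : R | 0 <= r }) : 0 <= proj1_sig r * proj1_sig t.
Proof. destruct r, t; simpl; apply Rmult_le_pos; assumption. Qed.
Lemma min_nonneg (r t : { r : R | 0 <= r }) : 0 <= Rmin (proj1_sig r) (proj1_sig t).
Proof. destruct r, t; simpl; unfold Rmin; destruct Rle_dec; assumption. Qed.
Lemma max_nonneg (r t : { r : R | 0 <= r }) : 0 <= Rmax (proj1_sig r) (proj1_sig t).
Proof. destruct r, t; simpl; unfold Rmax; destruct Rle_dec; assumption. Qed.

Definition ENN_plus (a b : ENN) : ENN :=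
  match a, b with
  | Fin r, Fin t => Fin (exist _ _ (plus_nonneg r t))
  | _, _ => Inf
  end.

(** multiplication with 0 * oo = 0 *)
Definition ENN_mult (a b : ENN) : ENN :=
  match a, b with
  | Fin r, Fin t => Fin (exist _ _ (mult_nonneg r t))
  | Fin r, Inf => if Req_EM_T (proj1_sig r) 0 then fin0 else Inf
  | Inf, Fin t => if Req_EM_T (proj1_sig t) 0 then fin0 else Inf
  | Inf, Inf => Inf
  end.

Definition ENN_min (a b : ENN) : ENN :=
  match a, b with
  | Fin r, Fin t => Fin (exist _ _ (min_nonneg r t))
  | Inf, y => y
  | x, Inf => x
  end.

Definition ENN_max (a b : ENN) : ENN :=
  match a, b with
  | Fin r, Fin t => Fin (exist _ _ (max_nonneg r t))
  | _, _ => Inf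
  end.

Definition Exp := State -> ENN.
Definition Eplus (f g : Exp) : Exp := fun s => ENN_plus (f s) (g s).
Definition Emult (f g : Exp) : Exp := fun s => ENN_mult (f s) (g s).
Definition Emin (f g : Exp) : Exp := fun s => ENN_min (f s) (g s).
Definition Emax (f g : Exp) : Exp := fun s => ENN_max (f s) (g s).

Definition fin1 : ENN := Fin (exist _ 1 Rle_0_1).

Definition iverson (phi : Pred) : Exp :=
  fun s => if excluded_middle_informative (phi s) then fin1 else fin0.

Definition guardE (phi : Pred) (g : Exp) : Exp :=
  fun s => if excluded_middle_informative (phi s) then g s else Inf.

Definition subst (f : Exp) (x : Var) (E : State -> Val) : Exp :=
  fun s => f (upd s x (E s)).

Definition Prob := { r : R | 0 <= r <= 1 }.

Lemma prob_nonneg (p : Prob) : 0 <= proj1_sig p.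
Proof. destruct p; simpl; lra. Qed.
Lemma prob_compl_nonneg (p : Prob) : 0 <= 1 - proj1_sig p.
Proof. destruct p; simpl; lra. Qed.

Definition probE (p : State -> Prob) : Exp :=
  fun s => Fin (exist _ _ (prob_nonneg (p s))).
Definition probE_compl (p : State -> Prob) : Exp :=
  fun s => Fin (exist _ _ (prob_compl_nonneg (p s))).

Inductive pGCL : Type :=
| Skip : pGCL
| Assign : Var -> (State -> Val) -> pGCL
| Seq : pGCL -> pGCL -> pGCL
| GChoice : Pred -> pGCL -> Pred -> pGCL -> pGCL
| PChoice : pGCL -> (State -> Prob) -> pGCL -> pGCL
| While : Pred -> pGCL -> Exp -> pGCL.                  (* while(phi){C}[I] *)

Fixpoint wf (C : pGCL) : Prop :=
  match C with
  | Skip | Assign _ _ => True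
  | Seq C1 C2 => wf C1 /\ wf C2
  | GChoice p1 C1 p2 C2 => valid (fun s => p1 s \/ p2 s) /\ wf C1 /\ wf C2
  | PChoice C1 _ C2 => wf C1 /\ wf C2
  | While _ C' _ => wf C'
  end.

Inductive Transformer := DWP | AWP.

Fixpoint Tstar (T : Transformer) (C : pGCL) (f : Exp) : Exp :=
  match C with
  | Skip => f
  | Assign x E => subst f x E
  | Seq C1 C2 => Tstar T C1 (Tstar T C2 f)
  | GChoice p1 C1 p2 C2 =>
      match T with
      | DWP => Emin (guardE p1 (Tstar T C1 f)) (guardE p2 (Tstar T C2 f))
      | AWP => Emax (Emult (iverson p1) (Tstar T C1 f))
                    (Emult (iverson p2) (Tstar T C2 f))
      end
  | PChoice C1 p C2 =>
      Eplus (Emult (probE p) (Tstar T C1 f)) (Emult (probE_compl p) (Tstar T C2 f))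
  | While _ _ Inv => Inv
  end.

Inductive Bowtie := PREC | SUCC.

Definition cmpP (b : Bowtie) (f g : Exp) : Pred :=
  match b with
  | PREC => fun s => ENN_le (f s) (g s)
  | SUCC => fun s => ENN_le (g s) (f s)
  end.

Fixpoint trans (b : Bowtie) (T : Transformer) (C : pGCL) (f : Exp) : pGCL :=
  match C with
  | Skip => Skip
  | Assign x E => Assign x E
  | Seq C1 C2 => Seq (trans b T C1 (Tstar T C2 f)) (trans b T C2 f)
  | GChoice p1 C1 p2 C2 =>
      let psi1 := fun s => p1 s /\ (p2 s -> cmpP b (Tstar T C1 f) (Tstar T C2 f) s) in
      let psi2 := fun s => p2 s /\ (p1 s -> cmpP b (Tstar T C2 f) (Tstar T C1 f) s) in
      GChoice psi1 (trans b T C1 f) psi2 (trans b T C2 f)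
  | PChoice C1 p C2 => PChoice (trans b T C1 f) p (trans b T C2 f)
  | While phi C' Inv => While phi (trans b T C' Inv) Inv
  end.

(** * Implementation relation: C' ⊸ C  (impl C' C) *)
Inductive impl : pGCL -> pGCL -> Prop :=
| impl_refl : forall C, impl C C
| impl_trans : forall C1 C2 C3, impl C1 C2 -> impl C2 C3 -> impl C1 C3
| impl_seq : forall C1' C2' C1 C2,
    impl C1' C1 -> impl C2' C2 -> impl (Seq C1' C2') (Seq C1 C2)
| impl_prob : forall C1' C2' C1 C2 p,
    impl C1' C1 -> impl C2' C2 -> impl (PChoice C1' p C2') (PChoice C1 p C2)
| impl_guard : forall C1' C2' C1 C2 (p1' p2' p1 p2 : Pred),
    impl C1' C1 -> impl C2' C2 ->
    entails p1' p1 -> entails p2' p2 -> valid (fun s => p1' s \/ p2' s) ->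
    impl (GChoice p1' C1' p2' C2') (GChoice p1 C1 p2 C2)
| impl_while : forall phi C' C (Inv' Inv : Exp),
    impl C' C -> impl (While phi C' Inv') (While phi C Inv).

(* Induction on the program: trans only strengthens the guards of guarded
   choices, and the strengthened guards still cover every state because the
   comparison of expectations is total on [0, oo]. *)
From Stdlib Require Import Reals Lra Classical.

Lemma ENN_le_total (a c : ENN) : ENN_le a c \/ ENN_le c a.
Proof.
  destruct a as [[r hr]|], c as [[t ht]|]; simpl; auto.
  destruct (Rle_or_lt r t); [left | right]; lra.
Qed.

Lemma cmpP_total (b : Bowtie) (X Y : Exp) (s : State) :
  cmpP b X Y s \/ cmpP b Y X s.
Proof. destruct b; apply ENN_le_total. Qed.

Lemma impl_guard_strengthen (p1 p2 q1 q2 : Pred) (C1' C2' C1 C2 : pGCL) :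
  impl C1' C1 -> impl C2' C2 ->
  valid (fun s => p1 s \/ p2 s) -> valid (fun s => q1 s \/ q2 s) ->
  impl (GChoice (fun s => p1 s /\ (p2 s -> q1 s)) C1'
                (fun s => p2 s /\ (p1 s -> q2 s)) C2')
       (GChoice p1 C1 p2 C2).
Proof.
  intros H1 H2 Hp Hq. apply impl_guard; auto.
  - intros s [h _]; exact h.
  - intros s [h _]; exact h.
  - intros s. destruct (Hp s), (Hq s), (classic (p1 s)), (classic (p2 s)); tauto.
Qed.

Theorem theorem6p2 (b : Bowtie) (T : Transformer) (C : pGCL) (f : Exp) :
  wf C -> impl (trans b T C f) C.
Proof.
  revert f; induction C as [| | C1 IH1 C2 IH2 | p1 C1 IH1 p2 C2 IH2
                           | C1 IH1 p C2 IH2 | phi C' IH Inv];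
    intros f Hwf; simpl in *.
  - apply impl_refl.
  - apply impl_refl.
  - destruct Hwf; apply impl_seq; auto.
  - destruct Hwf as [Hcover [Hwf1 Hwf2]].
    apply impl_guard_strengthen; auto.
    intros s; apply cmpP_total.
  - destruct Hwf; apply impl_prob; auto.
  - apply impl_while; auto.
Qed.
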